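(* Let $\Gamma$ be a splice diagram satisfying the edge determinant condition. Then the piecewise linear map $\rho:\Gamma\to\Delta_{n-1}$ is injective.
   Context: A splice diagram is a finite tree $\Gamma$ with at least one vertex of valency $\geq3$ and no vertex of valency $2$; vertices of valency $1$ are leaves, others nodes. For each node $v$ and edge $e$ at $v$ a positive integer weight $d_{v,e}$ is given; $d_{v,u}$ is the weight at $v$ of the edge toward $u$. For distinct vertices $u,v$, $\ell_{u,v}$ is the product of all $d_{w,e}$ with $w$ a node on the geodesic $[u,v]$ and $e$ an edge at $w$ not in $[u,v]$. Edge determinant condition: $d_{u,v}d_{v,u}>\ell_{u,v}$ for every edge $[u,v]$ between two nodes. With $n$ leaves, $\Delta_{n-1}\subset\mathbb{R}^n$ is the standard simplex with vertices the standard basis vectors $w_\lambda$ indexed by the leaves; $w_u=\sum_\lambda\ell_{u,\lambda}w_\lambda$ for a node $u$. The map $\rho$ sends each vertex $u$ to $w_u/|w_u|$ ($1$-norm), and each edge (identified with $[0,1]$) affinely onto the segment between the images of its endpoints. *)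

From HB Require Import structures.
From mathcomp Require Import all_boot all_order all_algebra.
From mathcomp Require Import boolp.
Set Implicit Arguments. Unset Strict Implicit. Unset Printing Implicit Defensive.
Import Order.TTheory GRing.Theory Num.Theory.

Section SpliceDiagrams.
Variables (V : finType) (adj : rel V).

Definition valency (v : V) : nat := #|[set x | adj v x]|.
Definition is_leaf (v : V) : bool := valency v == 1%N.
Definition is_node (v : V) : bool := valency v != 1%N.

Definition simple_path (u v : V) (p : seq V) : bool :=
  [&& path adj u p, last u p == v & uniq (u :: p)].

Definition is_tree : Prop :=
  symmetric adj /\ irreflexive adj /\
  forall u v : V, exists! p : seq V, simple_path u v p.

Definition splice_tree : Prop :=
  is_tree /\ (exists v : V, 3 <= valency v)%N /\ (forall v : V, valency v != 2%N).

Definition on_geod (u v w : V) : Prop :=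
  exists p, simple_path u v p /\ w \in u :: p.

Definition geod_edge (u v w x : V) : Prop :=
  exists p, simple_path u v p /\
    (infix [:: w; x] (u :: p) || infix [:: x; w] (u :: p)).

Variable d : V -> V -> nat.  (* d w x = weight at node w of the edge towards neighbour x *)

Definition weights_pos : Prop :=
  forall w x : V, is_node w -> adj w x -> (0 < d w x)%N.

Definition ell (u v : V) : nat :=
  \prod_(w | `[< on_geod u v w >] && is_node w)
     \prod_(x | adj w x && ~~ `[< geod_edge u v w x >]) d w x.

Definition edge_determinant : Prop :=
  forall u v : V, adj u v -> is_node u -> is_node v ->
    (ell u v < d u v * d v u)%N.

Variable R : realFieldType.
Local Open Scope ring_scope.

(* points of R^n, coordinates indexed by the leaves (non-leaf coordinates 0) *)
Definition wvec (u : V) : V -> R :=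
  fun y => if is_leaf y then
             (if is_leaf u then (y == u)%:R else (ell u y)%:R)
           else 0.

Definition norm1 (f : V -> R) : R := \sum_(y : V) `|f y|.

Definition rho_vert (u : V) : V -> R := fun y => wvec u y / norm1 (wvec u).

Definition rho_pt (a b : V) (t : R) : V -> R :=
  fun y => (1 - t) * rho_vert a y + t * rho_vert b y.

(* position of that point in the geometric realization |Gamma| of the tree,
   embedded as a simplicial complex in R^V: (1-t) e_a + t e_b *)
Definition realize (a b : V) (t : R) : V -> R :=
  fun y => (1 - t) * (y == a)%:R + t * (y == b)%:R.

End SpliceDiagrams.

From HB Require Import structures.
From mathcomp Require Import all_boot all_order all_algebra.
From mathcomp Require Import boolp.
From mathcomp Require Import ring lra.
Set Implicit Arguments. Unset Strict Implicit. Unset Printing Implicit Defensive.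
Import Order.TTheory GRing.Theory Num.Theory.

(* For an edge [p, q] let phi be the linear form summing the coordinates of the
   leaves in the branch of q.  Across any edge [y, y'] there is c >= 0 such that,
   leaf by leaf, w_y' >= c w_y, with equality exactly on the leaves in the branch
   of y; when y and y' are both nodes, strictness on the other leaves is the edge
   determinant condition.  Comparing normalised sums, phi o rho is maximal at p on
   the p-side of the edge, minimal at q on the q-side, and phi (rho p) <
   phi (rho q).  Hence phi o rho is strictly monotone on [p, q] and separates its
   interior from the rest of Gamma, which gives injectivity. *)

Section PartialSumRatio.
Local Open Scope ring_scope.
Variables (R : realFieldType) (I : finType) (P S : pred I) (f g : I -> R) (c : R).
Hypotheses (c_ge0 : 0 <= c) (g_ge0 : forall i, P i -> 0 <= g i).
Hypothesis f_ge : forall i, P i -> c * g i <= f i.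
Hypothesis f_eq : forall i, P i -> S i -> f i = c * g i.
Hypothesis sum_g_gt0 : 0 < \sum_(i | P i) g i.

Let sum_f_eq : \sum_(i | P i && S i) f i = c * \sum_(i | P i && S i) g i.
Proof. by rewrite mulr_sumr; apply: eq_bigr => i /andP[]; apply: f_eq. Qed.

Let sum_f_ge : c * \sum_(i | P i) g i <= \sum_(i | P i) f i.
Proof. by rewrite mulr_sumr; apply: ler_sum. Qed.

Let sumS_g_ge0 : 0 <= \sum_(i | P i && S i) g i.
Proof. by apply: sumr_ge0 => i /andP[Pi _]; apply: g_ge0. Qed.

Lemma partial_sum_ratio_le :
  (\sum_(i | P i && S i) f i) / (\sum_(i | P i) f i) <=
  (\sum_(i | P i && S i) g i) / (\sum_(i | P i) g i).
Proof.
rewrite sum_f_eq; set B := \sum_(i | _ && _) g i.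
set F := \sum_(i | P i) f i; set G := \sum_(i | P i) g i.
have [->|F0] := eqVneq F 0; first by rewrite invr0 mulr0 divr_ge0 // ltW.
have F_gt0 : 0 < F by rewrite lt_def F0 (le_trans _ sum_f_ge) // mulr_ge0 // ltW.
rewrite ler_pdivrMr // mulrAC ler_pdivlMr //.
by have := ler_wpM2l sumS_g_ge0 sum_f_ge; rewrite mulrCA mulrA.
Qed.

Lemma partial_sum_ratio_lt i0 : P i0 -> c * g i0 < f i0 ->
  0 < \sum_(i | P i && S i) g i ->
  (\sum_(i | P i && S i) f i) / (\sum_(i | P i) f i) <
  (\sum_(i | P i && S i) g i) / (\sum_(i | P i) g i).
Proof.
move=> Pi0 lt_i0 B_gt0; rewrite sum_f_eq; set B := \sum_(i | _ && _) g i.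
set F := \sum_(i | P i) f i; set G := \sum_(i | P i) g i.
have lt_F : c * G < F.
  rewrite /F /G mulr_sumr (bigD1 i0) //= [X in _ < X](bigD1 i0) //=.
  by rewrite ltr_leD // ler_sum // => i /andP[Pi _]; apply: f_ge.
have F_gt0 : 0 < F by rewrite (le_lt_trans _ lt_F) // mulr_ge0 // ltW.
rewrite ltr_pdivrMr // mulrAC ltr_pdivlMr //.
by rewrite [c * B]mulrC -mulrA ltr_pM2l.
Qed.

End PartialSumRatio.

(** * Branches of a tree *)

Section SpliceDiagram.
Variables (V : finType) (adj : rel V).
Hypothesis adj_sym : symmetric adj.
Hypothesis adj_irr : irreflexive adj.
Hypothesis path_exists : forall u v : V, exists p, simple_path adj u v p.
Hypothesis path_unique : forall u v p1 p2,
  simple_path adj u v p1 -> simple_path adj u v p2 -> p1 = p2.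

Local Notation spath := (simple_path adj).

Lemma adj_neq x y : adj x y -> x != y.
Proof. by apply: contraTneq => ->; rewrite adj_irr. Qed.

Lemma spath_nil u : spath u u [::].
Proof. by rewrite /simple_path /= eqxx. Qed.

Lemma spath_edge u v : adj u v -> spath u v [:: v].
Proof. by move=> uv; rewrite /simple_path /= uv eqxx mem_seq1 adj_neq. Qed.

Lemma spath_cons x y z q : adj x y -> spath y z q -> x \notin y :: q ->
  spath x z (y :: q).
Proof. by move=> xy /and3P[pq lq uq] xq; rewrite /simple_path /= xy pq lq xq. Qed.

Lemma spath_consE u z y q : spath u z (y :: q) ->
  [/\ adj u y, spath y z q & u \notin y :: q].
Proof.
by rewrite /simple_path /= => /and3P[/andP[-> ->] -> /andP[-> ->]].
Qed.

Lemma spath_rcons u v w p : spath u v p -> adj v w -> w \notin u :: p ->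
  spath u w (rcons p w).
Proof.
case/and3P => pp /eqP lp up vw wp.
by rewrite /simple_path rcons_path pp lp vw last_rcons eqxx -rcons_cons rcons_uniq wp up.
Qed.

Lemma spath_last u v p : spath u v p -> v \in u :: p.
Proof. by case/and3P => _ /eqP <- _; apply: mem_last. Qed.

Lemma spath_split u v p w : spath u v p -> w \in u :: p ->
  exists p1 p2, [/\ p = p1 ++ p2, spath u w p1 & spath w v p2].
Proof.
move=> + wp; case/splitPl: wp => p1 p2 lw sp; exists p1, p2; move: sp.
rewrite /simple_path cat_path last_cat lw => /and3P[/andP[pp1 pp2] l2].
rewrite -cat_cons cat_uniq => /and3P[u1 /hasPn dis u2].
split=> //; first by rewrite pp1 eqxx u1.
rewrite pp2 l2 /= u2 andbT; apply: contraT => /negbNE w2.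
by have := dis w w2; rewrite -lw mem_last.
Qed.

Lemma spath_pred_unique u v p w1 w2 : spath u v p ->
  w1 \in u :: p -> adj w1 v -> w2 \in u :: p -> adj w2 v -> w1 = w2.
Proof.
move=> sp w1p w1v w2p w2v.
have [p1 [p2 [ep s1 t1]]] := spath_split sp w1p.
have [q1 [q2 [eq s2 t2]]] := spath_split sp w2p.
move: (path_unique t1 (spath_edge w1v)) (path_unique t2 (spath_edge w2v)) => e1 e2.
have pq : p1 = q1 by apply: (@rcons_injl _ v); rewrite -!cats1; congruence.
by move: s1 s2; rewrite pq => /and3P[_ /eqP <- _] /and3P[_ /eqP <- _].
Qed.

(* For an edge [x, y], [branch x y] is the component of y once the edge is removed. *)
Definition branch (x y z : V) : Prop := exists q, spath y z q /\ x \notin y :: q.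

Definition branchb (x y : V) : pred V := fun z => `[< branch x y z >].

Lemma branchbP x y z : reflect (branch x y z) (branchb x y z).
Proof. exact: asboolP. Qed.

Lemma branch_irr x y : ~ branch x y x.
Proof. by case=> q [/spath_last xq]; rewrite xq. Qed.

Lemma branch_dichotomy x y z : adj x y -> branch x y z \/ branch y x z.
Proof.
move=> xy; have [p sp] := path_exists x z.
have [yp|yp] := boolP (y \in x :: p); last by right; exists p.
have [p1 [p2 [ep s1 s2]]] := spath_split sp yp.
left; exists p2; split=> //.
by move: sp; rewrite ep (path_unique s1 (spath_edge xy)) => /and3P[_ _ /andP[]].
Qed.

Lemma branch_disjoint x y z : adj x y -> branch x y z -> branch y x z -> False.
Proof.
move=> xy [q [sq xq]] [p [sp yp]].
by move: yp; rewrite (path_unique sp (spath_cons xy sq xq)) !inE eqxx orbT.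
Qed.

Lemma branchbC x y z : adj x y -> branchb y x z = ~~ branchb x y z.
Proof.
move=> xy; apply/idP/idP => [/branchbP yx|/branchbP nxy].
  by apply/branchbP => xy'; apply: branch_disjoint xy xy' yx.
by apply/branchbP; case: (branch_dichotomy z xy).
Qed.

Lemma branch_step x y y' z : adj x y -> adj y y' -> x != y' ->
  branch y x z -> branch y' y z.
Proof.
move=> xy yy' xy' [s [ss ys]]; exists (x :: s); split.
  by apply: spath_cons; rewrite // adj_sym.
rewrite inE negb_or eq_sym adj_neq //= inE negb_or eq_sym xy' /=.
apply/negP => y's; have y'xs : y' \in x :: s by rewrite inE y's orbT.
have [p1 [p2 [ep s1 _]]] := spath_split ss y'xs.
have xyy' : spath x y' [:: y; y'].
  by rewrite spath_cons ?spath_edge // !inE negb_or adj_neq.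
by move: ys; rewrite ep (path_unique s1 xyy') !inE eqxx !orbT.
Qed.

Lemma branch_cross a b a' b' : adj a b -> adj a' b' ->
  branch a b a' -> branch b a b' -> a' = b /\ b' = a.
Proof.
move=> ab a'b' [q [sq aq]] [p [sp bp]].
have sba := spath_cons (etrans (adj_sym b a) ab) sp bp.
have [b'q|b'q] := boolP (b' \in b :: q).
  have [p1 [p2 [eq s1 _]]] := spath_split sq b'q.
  by move: aq; rewrite eq (path_unique s1 sba) !inE eqxx !orbT.
move: (path_unique (spath_rcons sq a'b' b'q) sba) aq.
case: q sq {b'q} => [|c q] sq /=.
  by case=> <-; case/and3P: sq => _ /eqP.
by case=> -> _; rewrite !inE eqxx !orbT.
Qed.

Lemma spath_pred u v p : spath u v p -> p != [::] ->
  exists2 w, w \in u :: p & adj w v.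
Proof.
case/lastP: p => [//|p z] /and3P[+ /eqP + _] _.
rewrite rcons_path last_rcons => /andP[_ wz] <-; exists (last u p) => //.
by rewrite -rcons_cons mem_rcons inE mem_last orbT.
Qed.

Lemma leaf_adj_unique v a b : is_leaf adj v -> adj v a -> adj v b -> a = b.
Proof.
rewrite /is_leaf /valency => /cards1P[c ec] va vb.
have : (a \in [set x | adj v x]) && (b \in [set x | adj v x]) by rewrite !inE va vb.
by rewrite ec !inE => /andP[/eqP -> /eqP ->].
Qed.

Lemma nonleaf_adj_other v a : ~~ is_leaf adj v -> adj v a -> exists2 b, adj v b & b != a.
Proof.
move=> vl va; apply: contrapT => none; move: vl; rewrite /is_leaf /valency.
suff -> : [set x | adj v x] = [set a] by rewrite cards1.
apply/setP => b; rewrite !inE; apply/idP/eqP => [vb|-> //].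
by apply: contrapT => /eqP ba; apply: none; exists b.
Qed.

Lemma branch_leaf x y z : adj x y -> is_leaf adj y -> branch x y z -> z = y.
Proof.
move=> xy yl [[|c q] [sq xq]]; first by case/and3P: sq => _ /eqP.
case/spath_consE: sq => yc _ _; move: xq; rewrite !inE.
by rewrite (leaf_adj_unique yl yc (etrans (adj_sym y x) xy)) eqxx orbT.
Qed.

Lemma branch_extend x y z s : adj x y -> spath y z s -> x \notin y :: s ->
  ~~ is_leaf adj z -> exists z', spath y z' (rcons s z') /\ x \notin y :: rcons s z'.
Proof.
move=> xy sz xs zl; have P := spath_cons xy sz xs.
have [w wP wz] := spath_pred P isT.
have [z' zz' z'w] := nonleaf_adj_other zl (etrans (adj_sym z w) wz).
have z'P : z' \notin x :: y :: s.
  apply: contra z'w => z'P; apply/eqP.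
  by apply: spath_pred_unique P z'P _ wP wz; rewrite adj_sym.
by case/spath_consE: (spath_rcons P zz' z'P) => _ ? ?; exists z'.
Qed.

Lemma branch_has_leaf x y : adj x y -> exists2 l, is_leaf adj l & branch x y l.
Proof.
move=> xy; apply: contrapT => noleaf.
have long n : exists z s, [/\ spath y z s, x \notin y :: s & n <= size s].
  elim: n => [|n [z [s [sz xs ns]]]].
    by exists y, [::]; rewrite spath_nil mem_seq1 adj_neq.
  have zl : ~~ is_leaf adj z by apply/negP => zl; apply: noleaf; exists z => //; exists s.
  have [z' [sz' xs']] := branch_extend xy sz xs zl.
  by exists z', (rcons s z'); rewrite size_rcons ltnS.
have [z [s [/and3P[_ _ /card_uniqP us] _ ns]]] := long #|V|.
by move: (max_card (mem (y :: s))); rewrite us /= ltnNge ns.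
Qed.

(** * The weights ell along geodesics *)

Variable d : V -> V -> nat.
Hypothesis d_gt0 : weights_pos adj d.

Definition seq_edge (s : seq V) (w t : V) : bool :=
  infix [:: w; t] s || infix [:: t; w] s.

Definition off_path_weight (s : seq V) (w : V) : nat :=
  \prod_(t | adj w t && ~~ seq_edge s w t) d w t.

Definition weight_except (x y : V) : nat := \prod_(t | adj x t && (t != y)) d x t.

Lemma ell_spath u v p : spath u v p ->
  ell adj d u v = \prod_(w | (w \in u :: p) && is_node adj w) off_path_weight (u :: p) w.
Proof.
move=> sp; have onp w : `[< on_geod adj u v w >] = (w \in u :: p).
  apply/asboolP/idP => [[p' [sp' ?]]|]; last by exists p.
  by rewrite (path_unique sp sp').
have edgep w t : `[< geod_edge adj u v w t >] = seq_edge (u :: p) w t.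
  apply/asboolP/idP => [[p' [sp' ?]]|]; last by exists p.
  by rewrite (path_unique sp sp').
by apply: eq_big => w; rewrite ?onp // => _; apply: eq_bigl => t; rewrite edgep.
Qed.

Lemma seq_edge_mem s w t : seq_edge s w t -> (w \in s) && (t \in s).
Proof. by case/orP => /infixW/mem_subseq sub; rewrite !sub ?inE ?eqxx ?orbT. Qed.

Lemma seq_edge_cons2 x y q w t : seq_edge [:: x, y & q] w t =
  [|| (w == x) && (t == y), (t == x) && (w == y) | seq_edge (y :: q) w t].
Proof.
rewrite /seq_edge !infix_consl !prefix_cons !prefix0s !andbT.
by rewrite -!orbA; congr (_ || _); rewrite [X in _ || X]orbCA orbCA.
Qed.

Lemma ell_step x y z q : adj x y -> is_node adj x -> is_node adj y ->
  spath y z q -> x \notin y :: q ->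
  (ell adj d x z * d y x = weight_except x y * ell adj d y z)%N.
Proof.
move=> xy xn yn sq xq; have sx := spath_cons xy sq xq.
have yx : adj y x by rewrite adj_sym.
have not_x t : (seq_edge (y :: q) x t = false) * (seq_edge (y :: q) t x = false).
  by split; apply: contraNF xq => /seq_edge_mem/andP[].
have at_x : off_path_weight [:: x, y & q] x = weight_except x y.
  apply: eq_bigl => t; rewrite seq_edge_cons2 not_x eqxx orbF /=.
  by rewrite (negPf (adj_neq xy)) andbF orbF.
have at_y : off_path_weight (y :: q) y = (d y x * off_path_weight [:: x, y & q] y)%N.
  rewrite /off_path_weight (bigD1 x) /=; last by rewrite not_x yx.
  congr (_ * _)%N.
  apply: eq_bigl => t; rewrite seq_edge_cons2 (negPf (adj_neq yx)) eqxx andbT.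
  by rewrite /= negb_or -andbA (andbC (~~ _)).
have beyond_y w : w \in y :: q -> w != y ->
    off_path_weight [:: x, y & q] w = off_path_weight (y :: q) w.
  move=> wq wy; have wx : w != x by apply: contraNneq xq => <-.
  by apply: eq_bigl => t; rewrite seq_edge_cons2 (negPf wx) (negPf wy) andbF.
rewrite (ell_spath sx) (ell_spath sq) (bigD1 x) /= ?inE ?eqxx ?xn // at_x.
have -> : \prod_(w | ((w \in [:: x, y & q]) && is_node adj w) && (w != x))
            off_path_weight [:: x, y & q] w =
          \prod_(w | (w \in y :: q) && is_node adj w) off_path_weight [:: x, y & q] w.
  apply: eq_bigl => w; case: (eqVneq w x) => [->|wx]; first by rewrite (negPf xq) andbF.
  by rewrite andbT in_cons (negPf wx).
rewrite (bigD1 y) /=; last by rewrite inE eqxx yn.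
rewrite [in RHS](bigD1 y) /=; last by rewrite inE eqxx yn.
rewrite at_y (eq_bigr (off_path_weight (y :: q))) => [|w /andP[/andP[wq _] wy]].
  by ring.
exact: beyond_y.
Qed.

Lemma ell_gt0 u v : (0 < ell adj d u v)%N.
Proof.
apply: prodn_cond_gt0 => w /andP[_ wn]; apply: prodn_cond_gt0 => t /andP[wt _].
exact: d_gt0.
Qed.

Lemma ell_edge x y : adj x y -> is_node adj x -> is_node adj y ->
  ell adj d x y = (weight_except x y * weight_except y x)%N.
Proof.
move=> xy xn yn; have yx : adj y x by rewrite adj_sym.
have := ell_step xy xn yn (spath_nil y); rewrite mem_seq1 adj_neq // => /(_ isT).
have -> : ell adj d y y = (d y x * weight_except y x)%N.
  rewrite (ell_spath (spath_nil y)) (big_pred1 y) => [|w]; last first.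
    by rewrite mem_seq1 andb_idr // => /eqP ->.
  have no_edge t : seq_edge [:: y] y t = false by rewrite /seq_edge /= !andbF.
  rewrite /off_path_weight (bigD1 x); last by rewrite no_edge yx.
  by congr (_ * _)%N; apply: eq_bigl => t; rewrite no_edge andbT.
by rewrite mulnCA mulnC => /eqP; rewrite eqn_pmul2l ?d_gt0 // => /eqP.
Qed.

(** * Leaf sums of the map rho *)

Variable R : realFieldType.
Hypothesis edge_det : edge_determinant adj d.
Hypothesis leaf_exists : exists l, is_leaf adj l.
Local Open Scope ring_scope.
Local Notation w := (wvec adj d R).
Local Notation rho := (rho_vert adj d R).

Definition leaf_sum (S : pred V) (f : V -> R) : R := \sum_(l | is_leaf adj l && S l) f l.

Lemma wvec_ge0 z l : 0 <= w z l.
Proof. by rewrite /wvec; case: ifP => // _; case: ifP. Qed.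

Lemma wvec_leaf z l : is_leaf adj z -> is_leaf adj l -> w z l = (l == z)%:R.
Proof. by rewrite /wvec => -> ->. Qed.

Lemma wvec_node z l : is_node adj z -> is_leaf adj l -> w z l = (ell adj d z l)%:R.
Proof. by move=> zn ll; rewrite /wvec ll (negPf zn : is_leaf adj z = false). Qed.

Lemma wvec_node_gt0 z l : is_node adj z -> is_leaf adj l -> 0 < w z l.
Proof. by move=> zn ll; rewrite wvec_node // ltr0n ell_gt0. Qed.

Lemma wvec_branch_gt0 x z l : adj x z -> is_leaf adj l -> branch x z l -> 0 < w z l.
Proof.
move=> xz ll; have [zl /(branch_leaf xz zl) ->|zn _] := boolP (is_leaf adj z).
  by rewrite wvec_leaf // eqxx ltr01.
exact: wvec_node_gt0.
Qed.

Lemma wvec_sum_gt0 z : 0 < \sum_(l | is_leaf adj l) w z l.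
Proof.
have [l ll zl] : exists2 l, is_leaf adj l & 0 < w z l.
  have [zl|zn] := boolP (is_leaf adj z); first by exists z; rewrite ?wvec_leaf ?eqxx.
  by case: leaf_exists => l ll; exists l; rewrite ?wvec_node_gt0.
by rewrite (bigD1 l) //= ltr_pwDl // sumr_ge0 // => ? _; apply: wvec_ge0.
Qed.

Lemma leaf_sum_rho (S : pred V) z :
  leaf_sum S (rho z) = leaf_sum S (w z) / \sum_(l | is_leaf adj l) w z l.
Proof.
have norm : norm1 (w z) = \sum_(l | is_leaf adj l) w z l.
  rewrite /norm1 (bigID (is_leaf adj)) /= [X in _ + X]big1 ?addr0 => [|l].
    by apply: eq_bigr => l _; rewrite ger0_norm ?wvec_ge0.
  by rewrite /wvec => /negPf ->; rewrite normr0.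
by rewrite /leaf_sum /rho_vert norm mulr_suml.
Qed.

Lemma leaf_sum_rho_compl (S : pred V) z :
  leaf_sum (predC S) (rho z) = 1 - leaf_sum S (rho z).
Proof.
rewrite !leaf_sum_rho; set T := \sum_(l | _) _.
have T_neq0 : T != 0 by rewrite lt0r_neq0 ?wvec_sum_gt0.
rewrite -[1](divff T_neq0) -mulrBl; congr (_ / _).
by rewrite /T (bigID S) /= addrAC subrr add0r.
Qed.

Lemma leaf_sum_rho_pt (S : pred V) a b s :
  leaf_sum S (rho_pt adj d a b s) = (1 - s) * leaf_sum S (rho a) + s * leaf_sum S (rho b).
Proof. by rewrite /leaf_sum /rho_pt big_split /= -!mulr_sumr. Qed.

Lemma wvec_edge y y' : adj y y' -> exists2 c : R, 0 <= c &
  forall l, is_leaf adj l ->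
    (branch y' y l -> w y' l = c * w y l) /\ (branch y y' l -> c * w y l < w y' l).
Proof.
move=> yy'; have y'y : adj y' y by rewrite adj_sym.
have [y'l|y'n] := boolP (is_leaf adj y').
  exists 0 => // l ll; rewrite mul0r wvec_leaf //.
  split=> [|/(branch_leaf yy' y'l) ->]; last by rewrite eqxx ltr01.
  by case: eqVneq => // -> /branch_irr.
have [yl|yn] := boolP (is_leaf adj y).
  exists (w y' y) => [|l ll]; first exact: wvec_ge0.
  rewrite (wvec_leaf yl ll); split=> [/(branch_leaf y'y yl) ->|].
    by rewrite eqxx mulr1.
  by case: eqVneq => [-> /branch_irr //|_ _]; rewrite mulr0 wvec_node_gt0.
have dy_gt0 : 0 < (d y y')%:R :> R by rewrite ltr0n d_gt0.
have dy'_gt0 : 0 < (d y' y)%:R :> R by rewrite ltr0n d_gt0.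
exists ((weight_except y' y)%:R / (d y y')%:R) => [|l ll]; first by rewrite divr_ge0.
rewrite !wvec_node //; split=> -[r [sr y'r]].
  move/(congr1 (fun n => n%:R : R)): (ell_step y'y y'n yn sr y'r).
  by rewrite !natrM mulrAC => <-; rewrite mulfK ?lt0r_neq0.
move/(congr1 (fun n => n%:R : R)): (ell_step yy' yn y'n sr y'r); rewrite !natrM => e.
have := edge_det yy' yn y'n; rewrite ell_edge // -(ltr_nat R) !natrM => det.
have ell_y'l_gt0 : 0 < (ell adj d y' l)%:R :> R by rewrite ltr0n ell_gt0.
rewrite mulrAC ltr_pdivrMr // -(ltr_pM2r dy'_gt0) -mulrA e; nra.
Qed.

Lemma leaf_sum_step_le (S : pred V) y y' : adj y y' ->
  (forall l, is_leaf adj l -> S l -> branch y' y l) ->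
  leaf_sum S (rho y') <= leaf_sum S (rho y).
Proof.
move=> yy' Sy; have [c c_ge0 cmp] := wvec_edge yy'; rewrite !leaf_sum_rho.
apply: (partial_sum_ratio_le (c := c)) => // [l _|l ll|l ll Sl|].
- exact: wvec_ge0.
- by case: (cmp l ll) (branch_dichotomy l yy') => e lt [/lt/ltW|/e ->].
- by case: (cmp l ll) => e _; apply/e/Sy.
- exact: wvec_sum_gt0.
Qed.

Lemma leaf_sum_edge_lt p q : adj p q ->
  leaf_sum (branchb p q) (rho p) < leaf_sum (branchb p q) (rho q).
Proof.
move=> pq; have qp : adj q p by rewrite adj_sym.
have [c c_ge0 cmp] := wvec_edge qp; rewrite !leaf_sum_rho.
have [lp lpl lpp] := branch_has_leaf qp; have [lq lql lqq] := branch_has_leaf pq.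
apply: (partial_sum_ratio_lt c_ge0 _ _ _ lpl).
- by move=> l ll; case: (cmp l ll) (branch_dichotomy l qp) => e lt [/lt/ltW|/e ->].
- by move=> l ll /branchbP; case: (cmp l ll) => [e _] /e.
- exact: wvec_sum_gt0.
- by case: (cmp lp lpl) => [_]; apply.
rewrite (bigD1 lq) /=; last by rewrite lql; apply/branchbP.
by rewrite ltr_pwDl ?(wvec_branch_gt0 pq) // sumr_ge0 // => l _; apply: wvec_ge0.
Qed.

Lemma leaf_sum_branch_le (S : pred V) x y z : adj x y ->
  (forall l, is_leaf adj l -> S l -> branch y x l) -> branch x y z ->
  leaf_sum S (rho z) <= leaf_sum S (rho y).
Proof.
move=> + + [r [sr xr]]; elim: r x y sr xr => [|y' r IH] x y sr xr xy Sx.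
  by case/and3P: sr => _ /eqP <-.
case/spath_consE: sr => yy' sr yr.
have xy' : x != y' by apply: contraNneq xr => ->; rewrite !inE eqxx orbT.
have Sy l : is_leaf adj l -> S l -> branch y' y l.
  by move=> ll Sl; apply: branch_step xy yy' xy' (Sx l ll Sl).
exact: le_trans (IH y y' sr yr yy' Sy) (leaf_sum_step_le yy' Sy).
Qed.

Lemma leaf_sum_branch_tail p q z : adj p q -> branch q p z ->
  leaf_sum (branchb p q) (rho z) <= leaf_sum (branchb p q) (rho p).
Proof.
move=> pq; apply: leaf_sum_branch_le; first by rewrite adj_sym.
by move=> l _ /branchbP.
Qed.

Lemma leaf_sum_branch_head p q z : adj p q -> branch p q z ->
  leaf_sum (branchb p q) (rho q) <= leaf_sum (branchb p q) (rho z).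
Proof.
move=> pq pz; have qp : adj q p by rewrite adj_sym.
have compl u : leaf_sum (branchb p q) (rho u) = 1 - leaf_sum (branchb q p) (rho u).
  by rewrite -leaf_sum_rho_compl; apply: eq_bigl => l; rewrite /= (branchbC _ qp).
by rewrite !compl lerB // leaf_sum_branch_tail.
Qed.

Lemma rho_vert_inj : injective rho.
Proof.
move=> z z' e; apply/eqP/negPn/negP => zz'.
have [[|y r] sr] := path_exists z z'; first by move: zz'; case/and3P: sr => _ ->.
case/spath_consE: sr => zy sr zr.
have := leaf_sum_edge_lt zy; rewrite e ltNge.
by rewrite leaf_sum_branch_head //; exists r.
Qed.

Lemma rho_pt_swap a b (s : R) : rho_pt adj d b a s = rho_pt adj d a b (1 - s).
Proof. by apply: funext => l; rewrite /rho_pt; ring. Qed.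

Lemma realize_swap (a b : V) (s : R) : realize b a s = realize a b (1 - s).
Proof. by apply: funext => l; rewrite /realize; ring. Qed.

Lemma rho_pt_edge_inj a b (s t : R) : adj a b ->
  rho_pt adj d a b s = rho_pt adj d a b t -> s = t.
Proof.
move=> ab /(congr1 (leaf_sum (branchb a b))); rewrite !leaf_sum_rho_pt.
move: (leaf_sum_edge_lt ab); set A := leaf_sum _ (rho a); set B := leaf_sum _ (rho b).
move=> AB e; have : (s - t) * (B - A) = (1 - s) * A + s * B - ((1 - t) * A + t * B).
  by ring.
by rewrite e subrr => /eqP; rewrite mulf_eq0 !subr_eq0 (gt_eqF AB) orbF => /eqP.
Qed.

Lemma rho_pt_interior_inj a b a' b' (s t : R) : adj a b -> adj a' b' ->
  0 < s < 1 -> 0 <= t <= 1 -> rho_pt adj d a b s = rho_pt adj d a' b' t ->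
  realize a b s = realize a' b' t.
Proof.
move=> ab a'b' /andP[s_gt0 s_lt1] /andP[t_ge0 t_le1] e.
have b'a' : adj b' a' by rewrite adj_sym.
have := congr1 (leaf_sum (branchb a b)) e; rewrite !leaf_sum_rho_pt => phi_e.
have AB := leaf_sum_edge_lt ab.
case: (branch_dichotomy a' ab) => a'S; case: (branch_dichotomy b' ab) => b'S.
- have := leaf_sum_branch_head ab a'S; have := leaf_sum_branch_head ab b'S.
  by clear e => *; exfalso; nra.
- case: (branch_cross ab a'b' a'S b'S) => ea' eb'; subst a' b'.
  by rewrite [RHS]realize_swap (rho_pt_edge_inj ab (etrans e (rho_pt_swap _ _ _))).
- case: (branch_cross ab b'a' b'S a'S) => eb' ea'; subst a' b'.
  by rewrite (rho_pt_edge_inj ab e).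
- have := leaf_sum_branch_tail ab a'S; have := leaf_sum_branch_tail ab b'S.
  by clear e => *; exfalso; nra.
Qed.

Lemma rho_pt_vertex a b (s : R) : s = 0 \/ s = 1 ->
  exists z, rho_pt adj d a b s = rho z /\ realize a b s = (fun y => (y == z)%:R).
Proof.
by case=> ->; [exists a | exists b]; split; apply: funext => y;
  rewrite /rho_pt /realize; ring.
Qed.

Lemma rho_pt_inj a b a' b' (s t : R) : adj a b -> adj a' b' ->
  0 <= s <= 1 -> 0 <= t <= 1 -> rho_pt adj d a b s = rho_pt adj d a' b' t ->
  realize a b s = realize a' b' t.
Proof.
move=> ab a'b' s01 t01 e.
have [s_in|s_end] := boolP (0 < s < 1); first exact: rho_pt_interior_inj e.
have [t_in|t_end] := boolP (0 < t < 1); first exact/esym/(rho_pt_interior_inj a'b' ab).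
have vertex (x : R) : 0 <= x <= 1 -> ~~ (0 < x < 1) -> x = 0 \/ x = 1.
  case/andP=> x_ge0 x_le1; rewrite negb_and -!leNgt.
  by case/orP=> ?; [left|right]; apply/le_anti/andP.
have [z [rz ->]] := rho_pt_vertex a b (vertex s s01 s_end).
have [z' [rz' ->]] := rho_pt_vertex a' b' (vertex t t01 t_end).
by move: e; rewrite rz rz' => /rho_vert_inj ->.
Qed.
End SpliceDiagram.

Local Open Scope ring_scope.

Theorem theorem5p11 (R : realFieldType) (V : finType) (adj : rel V)
    (d : V -> V -> nat) :
  splice_tree adj -> weights_pos adj d -> edge_determinant adj d ->
  forall (a b a' b' : V) (s t : R),
    adj a b -> adj a' b' -> 0 <= s <= 1 -> 0 <= t <= 1 ->
    rho_pt adj d a b s = rho_pt adj d a' b' t ->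
    realize a b s = realize a' b' t.
Proof.
move=> [[sym [irr tree]] _] d_gt0 det a b a' b' s t ab.
have path_ex u v : exists p, simple_path adj u v p by case: (tree u v) => p [? _]; exists p.
have path_un u v p1 p2 : simple_path adj u v p1 -> simple_path adj u v p2 -> p1 = p2.
  by case: (tree u v) => p [_ uniq_p] /uniq_p <- /uniq_p <-.
have [l ll _] := branch_has_leaf sym irr path_un ab.
exact: (rho_pt_inj sym irr path_ex path_un d_gt0 det (ex_intro _ l ll) ab).
Qed.
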